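(* Let $P$ be a positive integer, let subcarrier indices be taken modulo $P$, let $\mathbb{P}^{\mathrm{DL}}$ be a set of subcarrier indices, and let $\mathcal{X}:\mathbb{Z}/P\mathbb{Z}\to\mathbb{C}$ be any function. For integers $k\ge 0$ and indices $p$, let $$\mathbb{Q}^{2k+1}_p=\Big\{(q_1,\dots,q_{2k+1})\in(\mathbb{P}^{\mathrm{DL}})^{2k+1} : \textstyle\sum_{i=1}^{k+1}q_i-\sum_{i=k+2}^{2k+1}q_i\equiv p \pmod P\Big\}$$ and $$\Phi_{2k+1}[p]=\frac{1}{P^{2k+1}}\sum_{(q_1,\dots,q_{2k+1})\in\mathbb{Q}^{2k+1}_p}\ \prod_{i=1}^{k+1}\mathcal{X}[q_i]\prod_{i=k+2}^{2k+1}\overline{\mathcal{X}[q_i]}.$$ Then for every integer $k\ge 1$ and every index $p$, $$\Phi_{2k+1}[p]=\frac{1}{P^{2}}\sum_{q_1,q_2\in\mathbb{P}^{\mathrm{DL}}}\mathcal{X}[q_1]\,\mathcal{X}[q_2]\,\overline{\Phi_{2k-1}[q_1+q_2-p]},$$ and also $$\Phi_{2k+1}[p]=\frac{1}{P^{2}}\sum_{q_1,q_{k+2}\in\mathbb{P}^{\mathrm{DL}}}\mathcal{X}[q_1]\,\overline{\mathcal{X}[q_{k+2}]}\,\Phi_{2k-1}[p-q_1+q_{k+2}],$$ where all index arithmetic is modulo $P$.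
   Context: This models an OFDM system with $P$ subcarriers; $\mathbb{P}^{\mathrm{DL}}=\{p^{\mathrm{DL}}_{\mathrm{start}},\dots,p^{\mathrm{DL}}_{\mathrm{end}}\}$ is the set of downlink subcarriers, $\mathcal{X}$ plays the role of the (IQ-imbalanced) frequency-domain downlink signal $\mathcal{X}^{\mathrm{IQ}}_m$ of one OFDM symbol, and $\Phi_{2k+1}$ is the $(2k+1)$th order intermodulation-distortion nonlinear basis in the frequency domain. $\overline{z}$ denotes complex conjugation. *)

From HB Require Import structures.
From mathcomp Require Import all_boot all_order all_algebra.
Set Implicit Arguments. Unset Strict Implicit. Unset Printing Implicit Defensive.
Import Order.TTheory GRing.Theory Num.Theory.
Local Open Scope ring_scope.

(* Subcarrier indices modulo P = n.+1 are elements of 'I_n.+1, whose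
   additive (zmodType) structure is arithmetic modulo n.+1.
   Phi n PDL X k p  is  Phi_{2k+1}[p]  (the (2k+1)th order IMD basis). *)
Definition Phi (C : numClosedFieldType) (n : nat) (PDL : {set 'I_n.+1})
  (X : 'I_n.+1 -> C) (k : nat) (p : 'I_n.+1) : C :=
  ((n.+1)%:R ^+ (2 * k + 1))^-1 *
  \sum_(q : {ffun 'I_(2 * k + 1) -> 'I_n.+1} |
          [forall i, q i \in PDL] &&
          ((\sum_(i < 2 * k + 1 | (i < k.+1)%N) q i)
           - (\sum_(i < 2 * k + 1 | (k.+1 <= i)%N) q i) == p))
     ((\prod_(i < 2 * k + 1 | (i < k.+1)%N) X (q i)) *
      (\prod_(i < 2 * k + 1 | (k.+1 <= i)%N) (X (q i))^*)).

(* Phi_{2k+1}[p] is P^-(2k+1) times a sum over pairs (s, t) of index vectors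
   in PDL of lengths k+1 and k, weighted by the products of the X (s i) and of
   the conjugates of the X (t j), restricted to sum s - sum t = p.  Peeling off
   one coordinate of s or of t gives a recursion for such sums in either length,
   and conjugating one swaps the roles of s and t and negates the target index.
   Peeling two coordinates of s leaves a sum of lengths (k-1, k), the conjugate
   of Phi_{2k-1}; peeling one of s and one of t leaves lengths (k, k-1), which
   is Phi_{2k-1} itself. *)

From HB Require Import structures.
From mathcomp Require Import all_boot all_order all_algebra.
From mathcomp Require Import zify ring.
Import GRing.Theory Num.Theory.
Set Implicit Arguments. Unset Strict Implicit.
Local Open Scope ring_scope.

Section FfunReindex.
Variables (T : finType) (R : Type) (idx : R) (op : Monoid.com_law idx).

Definition ffun_cons N (x : T) (q : {ffun 'I_N -> T}) : {ffun 'I_N.+1 -> T} :=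
  [ffun i => if unlift ord0 i is Some j then q j else x].

Lemma ffun_cons0 N x (q : {ffun 'I_N -> T}) : ffun_cons x q ord0 = x.
Proof. by rewrite ffunE unlift_none. Qed.

Lemma ffun_consS N x (q : {ffun 'I_N -> T}) j :
  ffun_cons x q (lift ord0 j) = q j.
Proof. by rewrite ffunE liftK. Qed.

Definition ffun_cat m n (s : {ffun 'I_m -> T}) (t : {ffun 'I_n -> T}) :
    {ffun 'I_(m + n) -> T} :=
  [ffun i => match split i with inl j => s j | inr j => t j end].

Lemma ffun_cat_lshift m n s (t : {ffun 'I_n -> T}) (i : 'I_m) :
  ffun_cat s t (lshift n i) = s i.
Proof. by rewrite ffunE (unsplitK (inl _)). Qed.

Lemma ffun_cat_rshift m n (s : {ffun 'I_m -> T}) t (j : 'I_n) :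
  ffun_cat s t (rshift m j) = t j.
Proof. by rewrite ffunE (unsplitK (inr _)). Qed.

Lemma big_ffun_cons N (P : pred T) (F : {ffun 'I_N.+1 -> T} -> R) :
  \big[op/idx]_(q : {ffun _ -> T} | [forall i, P (q i)]) F q =
  \big[op/idx]_(x | P x)
    \big[op/idx]_(q : {ffun 'I_N -> T} | [forall i, P (q i)]) F (ffun_cons x q).
Proof.
rewrite pair_big_dep (reindex (fun xq => ffun_cons xq.1 xq.2)) /=; last first.
  exists (fun q => (q ord0, [ffun j => q (lift ord0 j)])) => [[x q] _|q _] /=.
    rewrite ffun_cons0; congr pair.
    by apply/ffunP => j; rewrite ffunE ffun_consS.
  apply/ffunP => i; rewrite ffunE.
  by case: unliftP => [j ->|->]; rewrite ?ffunE.
apply: eq_bigl => -[x q] /=; apply/forallP/andP => [Pxq | [Px /forallP Pq] i].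
  rewrite -(ffun_cons0 x q); split=> //.
  by apply/forallP => j; rewrite -(ffun_consS x).
by case: (unliftP ord0 i) => [j ->|->]; rewrite ?ffun_cons0 ?ffun_consS.
Qed.

Lemma big_ffun_cat m n (P : pred T) (F : {ffun 'I_(m + n) -> T} -> R) :
  \big[op/idx]_(q : {ffun _ -> T} | [forall i, P (q i)]) F q =
  \big[op/idx]_(s : {ffun 'I_m -> T} | [forall i, P (s i)])
    \big[op/idx]_(t : {ffun 'I_n -> T} | [forall j, P (t j)]) F (ffun_cat s t).
Proof.
rewrite pair_big_dep (reindex (fun st => ffun_cat st.1 st.2)) /=; last first.
  exists (fun q => ([ffun i => q (lshift n i)], [ffun j => q (rshift m j)])).
    move=> [s t] _ /=; congr pair; apply/ffunP => i;
    by rewrite ffunE ?ffun_cat_lshift ?ffun_cat_rshift.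
  move=> q _; apply/ffunP => i; rewrite ffunE -[in RHS](splitK i).
  by case: (split i) => j; rewrite ffunE.
apply: eq_bigl => -[s t] /=.
apply/forallP/andP => [Pst | [/forallP Ps /forallP Pt] i].
  split; apply/forallP => i.
    by rewrite -(ffun_cat_lshift s t).
  by rewrite -(ffun_cat_rshift s t).
by rewrite -(splitK i); case: (split i) => j /=;
  rewrite ?ffun_cat_lshift ?ffun_cat_rshift.
Qed.

End FfunReindex.

Section SplitOrd.
Variables (R : Type) (idx : R) (op : Monoid.law idx).

Lemma big_split_ord_lo m n (F : 'I_(m + n) -> R) :
  \big[op/idx]_(i : 'I_(m + n) | (i < m)%N) F i =
  \big[op/idx]_(i < m) F (lshift n i).
Proof.
rewrite big_split_ord /= [X in op _ X]big_pred0 ?Monoid.mulm1 => [|j].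
  by apply: eq_bigl => i; rewrite ltn_ord.
by rewrite ltnNge leq_addr.
Qed.

Lemma big_split_ord_hi m n (F : 'I_(m + n) -> R) :
  \big[op/idx]_(i : 'I_(m + n) | (m <= i)%N) F i =
  \big[op/idx]_(j < n) F (rshift m j).
Proof.
rewrite big_split_ord /= big_pred0 ?Monoid.mul1m => [|i].
  by apply: eq_bigl => j; rewrite leq_addr.
by rewrite leqNgt ltn_ord.
Qed.

End SplitOrd.

Section ImdSum.
Variables (V : finZmodType) (C : numClosedFieldType) (A : {set V}) (X : V -> C).

Definition imd_sum a b (r : V) : C :=
  \sum_(s : {ffun 'I_a -> V} | [forall i, s i \in A])
    \sum_(t : {ffun 'I_b -> V} | [forall j, t j \in A])
      (if \sum_i s i - \sum_j t j == r
       then \prod_i X (s i) * \prod_j (X (t j))^* else 0).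

Lemma imd_sumSl a b r :
  imd_sum a.+1 b r = \sum_(x in A) X x * imd_sum a b (r - x).
Proof.
rewrite /imd_sum big_ffun_cons; apply: eq_bigr => x _.
rewrite !mulr_sumr; apply: eq_bigr => s _.
rewrite mulr_sumr; apply: eq_bigr => t _.
rewrite !big_ord_recl ffun_cons0 (eq_bigr _ (fun i _ => ffun_consS x s i)).
rewrite (eq_bigr _ (fun i _ => congr1 X (ffun_consS x s i))).
have shift y : (y == r - x) = (x + y == r).
  by rewrite eq_sym subr_eq eq_sym addrC.
by rewrite [RHS]fun_if mulr0 mulrA shift addrA.
Qed.

Lemma imd_sumSr a b r :
  imd_sum a b.+1 r = \sum_(y in A) (X y)^* * imd_sum a b (r + y).
Proof.
rewrite /imd_sum; under eq_bigr do rewrite big_ffun_cons.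
rewrite exchange_big; apply: eq_bigr => y _.
rewrite mulr_sumr; apply: eq_bigr => s _.
rewrite mulr_sumr; apply: eq_bigr => t _.
rewrite !big_ord_recl ffun_cons0 (eq_bigr _ (fun j _ => ffun_consS y t j)).
rewrite (eq_bigr _ (fun j _ => congr1 (fun z => (X z)^*) (ffun_consS y t j))).
by rewrite [RHS]fun_if mulr0 mulrCA -subr_eq opprD addrA [_ - y - _]addrAC.
Qed.

Lemma conj_imd_sum a b r : (imd_sum a b r)^* = imd_sum b a (- r).
Proof.
rewrite /imd_sum rmorph_sum exchange_big; apply: eq_bigr => t _.
rewrite rmorph_sum; apply: eq_bigr => s _.
rewrite [LHS]fun_if rmorph0 rmorphM !rmorph_prod -eqr_opp opprB mulrC.
by congr (if _ then _ * _ else _); apply: eq_bigr => i _; apply: conjCK.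
Qed.

Lemma imd_sum_split m n N (mnN : (m + n)%N = N) r :
  \sum_(q : {ffun 'I_N -> V} | [forall i, q i \in A] &&
       (\sum_(i < N | (i < m)%N) q i - \sum_(i < N | (m <= i)%N) q i == r))
    (\prod_(i < N | (i < m)%N) X (q i) * \prod_(i < N | (m <= i)%N) (X (q i))^*)
  = imd_sum m n r.
Proof.
case: N / mnN; rewrite big_mkcondr big_ffun_cat.
apply: eq_bigr => s _; apply: eq_bigr => t _.
rewrite !big_split_ord_lo !big_split_ord_hi.
rewrite (eq_bigr _ (fun i _ => ffun_cat_lshift s t i)).
rewrite (eq_bigr _ (fun j _ => ffun_cat_rshift s t j)).
rewrite (eq_bigr _ (fun i _ => congr1 X (ffun_cat_lshift s t i))).
have conjX_rshift j : (X (ffun_cat s t (rshift m j)))^* = (X (t j))^*.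
  by rewrite ffun_cat_rshift.
by rewrite (eq_bigr _ (fun j _ => conjX_rshift j)).
Qed.

End ImdSum.

Lemma Phi_imd_sum (C : numClosedFieldType) n (A : {set 'I_n.+1})
    (X : 'I_n.+1 -> C) k p :
  Phi A X k p = ((n.+1)%:R ^+ (2 * k + 1))^-1 * imd_sum A X k.+1 k p.
Proof.
by rewrite /Phi (imd_sum_split _ _ (_ : k.+1 + k = 2 * k + 1)%N) //; lia.
Qed.

Unset Implicit Arguments.

Theorem lemma1 (C : numClosedFieldType) (n : nat) (PDL : {set 'I_n.+1})
  (X : 'I_n.+1 -> C) (k : nat) (hk : (1 <= k)%N) (p : 'I_n.+1) :
  Phi PDL X k p =
    ((n.+1)%:R ^+ 2)^-1 *
    \sum_(q1 in PDL) \sum_(q2 in PDL)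
       X q1 * X q2 * (Phi PDL X k.-1 (q1 + q2 - p))^*
  /\
  Phi PDL X k p =
    ((n.+1)%:R ^+ 2)^-1 *
    \sum_(q1 in PDL) \sum_(qk2 in PDL)
       X q1 * (X qk2)^* * Phi PDL X k.-1 (p - q1 + qk2).
Proof.
case: k hk => // k _ /=; set P : C := (n.+1)%:R.
have scale : (P ^+ (2 * k.+1 + 1))^-1 = (P ^+ 2)^-1 * (P ^+ (2 * k + 1))^-1.
  by rewrite -invfM -exprD; congr (_ ^+ _)^-1; lia.
have conj_scaled m z : ((P ^+ m)^-1 * z)^* = (P ^+ m)^-1 * z^*.
  by rewrite rmorphM fmorphV rmorphXn rmorph_nat.
rewrite Phi_imd_sum scale -mulrA; split; congr (_ * _).
- rewrite imd_sumSl mulr_sumr; apply: eq_bigr => x _.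
  rewrite imd_sumSl !mulr_sumr; apply: eq_bigr => y _.
  rewrite Phi_imd_sum conj_scaled conj_imd_sum opprB opprD addrA.
  ring.
- rewrite imd_sumSl mulr_sumr; apply: eq_bigr => x _.
  rewrite imd_sumSr !mulr_sumr; apply: eq_bigr => y _.
  rewrite Phi_imd_sum; ring.
Qed.
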